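(* Let $\vec{\mathbf{e}}=(1,0)$, $\vec{\mathbf{f}}=(0,1)$. Let $E,E'$ be two copies of the flat plane $\mathbb{R}^2$. Let $\mathcal{S}$ be the family of marks on $E$ with endpoints $4n\vec{\mathbf{e}},(4n+1)\vec{\mathbf{e}}$ ($n\ge1$), $\mathcal{S}_{\mathrm{glue}}$ the family of marks on $E$ with endpoints $(4n+2)\vec{\mathbf{e}},(4n+3)\vec{\mathbf{e}}$ ($n\ge1$), $\mathcal{S}'$ the family of marks on $E'$ with endpoints $2n\vec{\mathbf{f}},2n\vec{\mathbf{f}}+\vec{\mathbf{e}}$ ($n\ge1$), and $\mathcal{S}'_{\mathrm{glue}}$ the family of marks on $E'$ with endpoints $(2n+1)\vec{\mathbf{f}},(2n+1)\vec{\mathbf{f}}+\vec{\mathbf{e}}$ ($n\ge 1$). Let $\hat{E}$ be the flat surface obtained from $E\sqcup E'$ by regluing along $\mathcal{S}_{\mathrm{glue}}$ and $\mathcal{S}'_{\mathrm{glue}}$; the families $\mathcal{S},\mathcal{S}'$ are inherited by $\hat{E}$. Let $g\in\mathbf{GL}_+(2,\mathbb{R})$ with $\|g\|\ge 1$, and let $\hat{E}_g$ be the surface obtained from $\hat{E}$ by post-composing every chart with $g$, with $\bar g:\hat E\to\hat E_g$ the canonical affine homeomorphism of derivative $g$. Then the distance in $\hat{E}_g$ between $\bar g(\bigcup\mathcal{S})$ and $\bar g(\bigcup\mathcal{S}')$ is at least $\frac{1}{\sqrt{2}}$.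
   Context: $\|g\|$ is the operator norm with respect to the Euclidean norm. A flat surface is a connected Riemann surface with a non-zero holomorphic $1$-form, carrying the induced translation atlas and flat metric. A mark is an oriented finite-length geodesic segment (with endpoints) avoiding singularities; in the plane it is determined by its endpoints, and its slope is its holonomy vector. Regluing along two disjoint marks $m,m'$ of equal slope: cut along $m$ and $m'$, obtaining four boundary segments, and reglue each side of the cut along $m$ to the opposite side of the cut along $m'$ by translation. For two sequences $(m_n),(m'_n)$ of disjoint non-accumulating marks with $m_n,m'_n$ of equal slope, regluing along them means regluing successively along $m_n,m'_n$ for all $n$ (in the limit). Marks disjoint from those used in a regluing are inherited by the resulting surface. Distances are measured in the flat (path) metric. *)

From HB Require Import structures.
From mathcomp Require Import all_boot all_order all_algebra.
From mathcomp Require Import all_classical all_reals all_analysis.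
Set Implicit Arguments. Unset Strict Implicit. Unset Printing Implicit Defensive.
Import Order.TTheory GRing.Theory Num.Theory.
Local Open Scope classical_set_scope.
Local Open Scope ring_scope.

(* Concrete model of the flat surface \hat E.
   A point of E ⊔ E' is a pair (s, p): s = false for E, s = true for E',
   p in R^2 represented as R * R. *)

Definition enorm (R : realType) (v : R * R) : R := Num.sqrt (v.1 ^+ 2 + v.2 ^+ 2).

Definition gapp (R : realType) (g : 'M[R]_2) (v : R * R) : R * R :=
  (g ord0 ord0 * v.1 + g ord0 ord_max * v.2,
   g ord_max ord0 * v.1 + g ord_max ord_max * v.2).

Definition opnorm (R : realType) (g : 'M[R]_2) : R :=
  sup [set enorm (gapp g v) | v in [set v : R * R | enorm v = 1]].

(* Gluing slits (marks of S_glue on E and S'_glue on E'), n >= 1: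
   sheet E  (false): from (4n+2, 0)  to (4n+3, 0)
   sheet E' (true) : from (0, 2n+1)  to (1, 2n+1)
   Each is [glue_left, glue_left + 1] x {glue_height}. *)
Definition glue_height (R : realType) (s : bool) (n : nat) : R :=
  if s then (2 * n + 1)%:R else 0.
Definition glue_left (R : realType) (s : bool) (n : nat) : R :=
  if s then 0 else (4 * n + 2)%:R.

Definition on_glue_interior (R : realType) (s : bool) (p : R * R) (n : nat) : Prop :=
  (1 <= n)%N /\ p.2 = glue_height R s n /\
  glue_left R s n < p.1 < glue_left R s n + 1.

Definition in_glue_interior (R : realType) (s : bool) (p : R * R) : Prop :=
  exists n, on_glue_interior s p n.

(* translation carrying the n-th slit of sheet s onto the n-th slit of the
   other sheet (the regluing identification) *)
Definition transfer (R : realType) (s : bool) (n : nat) (p : R * R) : R * R :=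
  (p.1 - glue_left R s n + glue_left R (~~ s) n,
   p.2 - glue_height R s n + glue_height R (~~ s) n).

Record leg (R : realType) := Leg { lsheet : bool; lsrc : R * R; ldst : R * R }.

Definition seg_point (R : realType) (p q : R * R) (t : R) : R * R :=
  (p.1 + t * (q.1 - p.1), p.2 + t * (q.2 - p.2)).

(* a leg is a genuine segment of the cut surface: its open part does not
   meet (cross) the interior of a gluing slit *)
Definition leg_ok (R : realType) (L : leg R) : Prop :=
  forall t : R, 0 < t < 1 -> ~ in_glue_interior (lsheet L) (seg_point (lsrc L) (ldst L) t).

Definition junction_ok (R : realType) (L1 L2 : leg R) : Prop :=
  let s1 := lsheet L1 in let s2 := lsheet L2 in
  let p1 := lsrc L1 in let q1 := ldst L1 in
  let p2 := lsrc L2 in let q2 := ldst L2 in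
  (s2 = s1 /\ p2 = q1 /\
    (~ in_glue_interior s1 q1 \/
     exists n, on_glue_interior s1 q1 n /\
       (* at a slit interior point, stay on the same side of the cut *)
       ((p1.2 < glue_height R s1 n /\ q2.2 < glue_height R s1 n) \/
        (glue_height R s1 n < p1.2 /\ glue_height R s1 n < q2.2))))
  \/
  (s2 = ~~ s1 /\ exists n, (1 <= n)%N /\ q1.2 = glue_height R s1 n /\
     glue_left R s1 n <= q1.1 <= glue_left R s1 n + 1 /\
     p2 = transfer s1 n q1 /\
     (* either at a slit endpoint (cone point), or at an interior point, where
        each side of one cut is glued to the opposite side of the other cut *)
     (q1.1 = glue_left R s1 n \/ q1.1 = glue_left R s1 n + 1 \/
      (p1.2 < glue_height R s1 n /\ glue_height R s2 n < q2.2) \/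
      (glue_height R s1 n < p1.2 /\ q2.2 < glue_height R s2 n))).

(* a polygonal path of \hat E: first leg L, remaining legs Ls *)
Fixpoint chain_ok (R : realType) (L : leg R) (Ls : seq (leg R)) : Prop :=
  leg_ok L /\
  match Ls with
  | [::] => True
  | L2 :: Ls' => junction_ok L L2 /\ chain_ok L2 Ls'
  end.

(* length of the path in \hat E_g (charts post-composed with g) *)
Definition chain_length (R : realType) (g : 'M[R]_2) (L : leg R) (Ls : seq (leg R)) : R :=
  \sum_(M <- L :: Ls) enorm (gapp g (ldst M - lsrc M)).

Definition chain_from_to (R : realType) (A B : set (bool * (R * R)))
  (L : leg R) (Ls : seq (leg R)) : Prop :=
  chain_ok L Ls /\ A (lsheet L, lsrc L) /\
  B (lsheet (last L Ls), ldst (last L Ls)).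

(* distance in \hat E_g between (the images under \bar g of) A and B *)
Definition hat_dist (R : realType) (g : 'M[R]_2) (A B : set (bool * (R * R))) : \bar R :=
  ereal_inf [set (chain_length g c.1 c.2)%:E |
             c in [set c : leg R * seq (leg R) | chain_from_to A B c.1 c.2]].

Definition marksS (R : realType) : set (bool * (R * R)) :=
  [set x | x.1 = false /\ exists n : nat, (1 <= n)%N /\ x.2.2 = 0 /\
           (4 * n)%:R <= x.2.1 <= (4 * n + 1)%:R].

Definition marksS' (R : realType) : set (bool * (R * R)) :=
  [set x | x.1 = true /\ exists n : nat, (1 <= n)%N /\ x.2.2 = (2 * n)%:R /\
           0 <= x.2.1 <= 1].

(* A path from a mark of S to a mark of S' must pass from E to E' through a
   gluing slit. In E, a mark of S and a slit on the same line are at horizontal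
   distance at least 1, so the path pays at least |g e1| before it crosses. After
   its last entry into E' at a slit point (height 2m+1, abscissa in [0,1]) it must
   reach a mark of S' (height 2n, abscissa in [0,1]): a displacement d (t, 1) with
   |t| <= 1 <= |d|, costing at least |g (t, 1)|. Writing a unit vector (a, b) as
   (a - t b) e1 + b (t, 1) and using |a| + |b| <= sqrt 2 gives
   1 <= ||g|| <= sqrt 2 (|g e1| + |g (t, 1)|). *)
From mathcomp Require Import all_boot all_order all_algebra.
From mathcomp Require Import all_classical all_reals all_analysis.
From mathcomp Require Import ring lra zify.
Set Implicit Arguments. Unset Strict Implicit. Unset Printing Implicit Defensive.
Import Order.TTheory GRing.Theory Num.Theory.
Local Open Scope ring_scope.

Section EuclideanPlane.
Variable R : realType.
Implicit Types (v w p q r : R * R) (g : 'M[R]_2).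

Lemma enorm_ge0 v : 0 <= enorm v.
Proof. exact: sqrtr_ge0. Qed.

Lemma enorm_sqr v : enorm v ^+ 2 = v.1 ^+ 2 + v.2 ^+ 2.
Proof. by rewrite /enorm sqr_sqrtr // addr_ge0 // sqr_ge0. Qed.

Lemma enorm0 : enorm (0 : R * R) = 0.
Proof. by rewrite /enorm /= expr0n addr0 sqrtr0. Qed.

Lemma enormZ (k : R) v : enorm (k *: v) = `|k| * enorm v.
Proof. by rewrite /enorm /= !exprMn -mulrDr sqrtrM ?sqr_ge0 // sqrtr_sqr. Qed.

Lemma ler_sqr_nneg (x y : R) : 0 <= y -> x ^+ 2 <= y ^+ 2 -> x <= y.
Proof.
move=> y0 le_sqr; apply: le_trans (ler_norm x) _.
by rewrite -ler_sqr ?nnegrE ?normr_ge0 // real_normK ?num_real.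
Qed.

Lemma enormD v w : enorm (v + w) <= enorm v + enorm w.
Proof.
case: v w => a b [c d].
have [nv nw] := (enorm_ge0 (a, b), enorm_ge0 (c, d)).
have [sv sw] := (enorm_sqr (a, b), enorm_sqr (c, d)).
have cauchy_schwarz : a * c + b * d <= enorm (a, b) * enorm (c, d).
  apply: ler_sqr_nneg; rewrite ?mulr_ge0 // exprMn sv sw /=.
  by have := sqr_ge0 (a * d - b * c); nra.
apply: ler_sqr_nneg; rewrite ?addr_ge0 // enorm_sqr /=.
move: cauchy_schwarz sv sw; set x := enorm _; set y := enorm _ => /=; nra.
Qed.

Lemma gappD g v w : gapp g (v + w) = gapp g v + gapp g w.
Proof. by case: v w => a b [c d]; rewrite /gapp; congr pair; rewrite /=; ring. Qed.

Lemma gappZ g (k : R) v : gapp g (k *: v) = k *: gapp g v.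
Proof. by case: v => a b; apply/pair_equal_spec; split; rewrite /= /GRing.scale /=; ring. Qed.

Definition gdist g p q := enorm (gapp g (q - p)).

Lemma gdist_ge0 g p q : 0 <= gdist g p q.
Proof. exact: enorm_ge0. Qed.

Lemma gdistxx g p : gdist g p p = 0.
Proof. by rewrite /gdist subrr -(scale0r 0) gappZ scale0r enorm0. Qed.

Lemma gdist_triangle g p q r : gdist g p r <= gdist g p q + gdist g q r.
Proof.
rewrite /gdist; have -> : r - p = (q - p) + (r - q) by rewrite [RHS]addrC addrA subrK.
by rewrite gappD enormD.
Qed.

Lemma normr_add_le_sqrt2 (x y : R) : x ^+ 2 + y ^+ 2 = 1 -> `|x| + `|y| <= Num.sqrt 2.
Proof.
move=> unit; apply: ler_sqr_nneg; rewrite ?sqrtr_ge0 // sqr_sqrtr //.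
have [nx ny] := (real_normK (num_real x), real_normK (num_real y)).
by have := sqr_ge0 (`|x| - `|y|); nra.
Qed.

Lemma opnorm_le_sqrt2 g t : `|t| <= 1 ->
  opnorm g <= Num.sqrt 2 * (enorm (gapp g (1, 0)) + enorm (gapp g (t, 1))).
Proof.
move=> t1; apply: ge_sup.
  by exists (enorm (gapp g (1, 0))), (1, 0); rewrite // /enorm /= expr1n expr0n addr0 sqrtr1.
move=> _ [[a b] /= unit_ab <-].
have {}unit_ab : a ^+ 2 + b ^+ 2 = 1 by rewrite -(enorm_sqr (a, b)) unit_ab expr1n.
have sum_le := normr_add_le_sqrt2 unit_ab.
have -> : (a, b) = (a - t * b) *: ((1, 0) : R * R) + b *: ((t, 1) : R * R).
  by apply/pair_equal_spec; split; rewrite /= /GRing.scale /=; ring.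
rewrite gappD !gappZ; apply: le_trans (enormD _ _) _; rewrite !enormZ.
have le_a_tb : `|a - t * b| <= Num.sqrt 2.
  apply: le_trans (ler_normB _ _) _; rewrite normrM.
  by have := normr_ge0 b; have := normr_ge0 t; have := normr_ge0 a; nra.
have le_b : `|b| <= Num.sqrt 2 by have := normr_ge0 a; lra.
by rewrite mulrDr lerD // ler_wpM2r ?enorm_ge0.
Qed.

Lemma inv_sqrt2_le_steep g v : 1 <= opnorm g -> `|v.1| <= `|v.2| -> 1 <= `|v.2| ->
  (Num.sqrt 2)^-1 <= enorm (gapp g (1, 0)) + enorm (gapp g v).
Proof.
case: v => c d /= opnorm_ge1 le_cd d_ge1.
have d_gt0 : 0 < `|d| by lra.
have d_neq0 : d != 0 by rewrite -normr_gt0.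
have -> : (c, d) = d *: ((c / d, 1) : R * R).
  by apply/pair_equal_spec; split; rewrite /= /GRing.scale /=; field.
rewrite gappZ enormZ.
have slope_le1 : `|c / d| <= 1 by rewrite normrM normfV ler_pdivrMr // mul1r.
have base : (Num.sqrt 2)^-1 <= enorm (gapp g (1, 0)) + enorm (gapp g (c / d, 1)).
  rewrite -[_^-1]mulr1 ler_pdivrMl ?sqrtr_gt0 //.
  exact (le_trans opnorm_ge1 (opnorm_le_sqrt2 g slope_le1)).
by apply: le_trans base _; rewrite lerD2l ler_peMl ?enorm_ge0.
Qed.

Lemma enorm_gapp_e1_le_horizontal g a : 1 <= `|a| ->
  enorm (gapp g (1, 0)) <= enorm (gapp g (a, 0)).
Proof.
move=> a1; have -> : (a, 0) = a *: ((1, 0) : R * R).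
  by apply/pair_equal_spec; split; rewrite /= /GRing.scale /= ?mulr1 ?mulr0.
by rewrite gappZ enormZ ler_peMl ?enorm_ge0.
Qed.

End EuclideanPlane.

Section FlatSurface.
Variable R : realType.
Implicit Types (p q : R * R) (s : bool).

Definition on_glue_slit s p (n : nat) : Prop :=
  p.2 = glue_height R s n /\ glue_left R s n <= p.1 <= glue_left R s n + 1.

Lemma on_glue_slit_transfer s p n :
  on_glue_slit s p n -> on_glue_slit (~~ s) (transfer s n p) n.
Proof.
rewrite /on_glue_slit /transfer /= => -[-> /andP[lo hi]].
by split; [rewrite subrr add0r | apply/andP; split; lra].
Qed.

Lemma junction_ok_cases L1 L2 : junction_ok L1 L2 ->
  (lsheet L2 = lsheet L1 /\ lsrc L2 = ldst L1) \/
  (lsheet L2 = ~~ lsheet L1 /\ exists n, on_glue_slit (lsheet L1) (ldst L1) n /\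
     lsrc L2 = transfer (lsheet L1) n (ldst L1)).
Proof.
case=> [[-> [-> _]] | [-> [n [_ [y_eq [x_range [-> _]]]]]]]; first by left.
by right; split => //; exists n.
Qed.

Lemma natr_normB_ge1 (a b : nat) : a <> b -> 1 <= `|a%:R - b%:R : R|.
Proof.
move=> /eqP; rewrite neq_ltn => /orP[] lt_ab.
- have : (a + 1)%:R <= b%:R :> R by rewrite ler_nat addn1.
  by rewrite natrD ler_normr => ?; apply/orP; right; lra.
- have : (b + 1)%:R <= a%:R :> R by rewrite ler_nat addn1.
  by rewrite natrD ler_normr => ?; apply/orP; left; lra.
Qed.

Lemma marksS'_steep_from_slit x p m : marksS' x -> on_glue_slit true p m ->
  `|(x.2 - p).1| <= 1 /\ 1 <= `|(x.2 - p).2|.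
Proof.
case=> _ [n [_ [yx /andP[x0 x1]]]] [yp /andP[p0 p1]]; rewrite /= in yp p0 p1.
split; first by rewrite ler_norml; apply/andP; split; lra.
by rewrite /= yx yp; apply: natr_normB_ge1; lia.
Qed.

Lemma marksS_far_from_slit p q n : marksS (false, p) -> on_glue_slit false q n ->
  1 <= `|(q - p).1| /\ (q - p).2 = 0.
Proof.
case=> _ [k [_ [yp /andP[p0 p1]]]] [yq /andP[q0 q1]]; rewrite /= in yq q0 q1.
split; last by rewrite /= yp yq subrr.
rewrite /= ler_normr; have [le_kn | lt_nk] := leqP k n.
- have : (4 * k + 1 + 1)%:R <= (4 * n + 2)%:R :> R by rewrite ler_nat; lia.
  by rewrite natrD => ?; apply/orP; left; lra.
- have : (4 * n + 2 + 1 + 1)%:R <= (4 * k)%:R :> R by rewrite ler_nat; lia.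
  by rewrite !natrD => ?; apply/orP; right; lra.
Qed.

End FlatSurface.

Section ChainLength.
Variables (R : realType) (g : 'M[R]_2).
Hypothesis opnorm_ge1 : 1 <= opnorm g.
Implicit Types (p q : R * R) (L : leg R).

Lemma chain_length_nil L : chain_length g L [::] = gdist g (lsrc L) (ldst L).
Proof. by rewrite /chain_length big_cons big_nil addr0. Qed.

Lemma chain_length_cons L L2 Ls :
  chain_length g L (L2 :: Ls) = gdist g (lsrc L) (ldst L) + chain_length g L2 Ls.
Proof. by rewrite /chain_length big_cons. Qed.

Lemma chain_length_ge0 L Ls : 0 <= chain_length g L Ls.
Proof. by apply: sumr_ge0 => M _; apply: enorm_ge0. Qed.

Lemma inv_sqrt2_le_slit_to_marksS' p m x : on_glue_slit true p m -> marksS' x ->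
  (Num.sqrt 2)^-1 <= enorm (gapp g (1, 0)) + gdist g p x.2.
Proof.
move=> slit_p /marksS'_steep_from_slit /(_ slit_p) [le1 ge1].
by apply: inv_sqrt2_le_steep => //; lra.
Qed.

Lemma e1_le_marksS_to_slit p q n : marksS (false, p) -> on_glue_slit false q n ->
  enorm (gapp g (1, 0)) <= gdist g p q.
Proof.
move=> /marksS_far_from_slit /[apply] [[ge1 y0]].
rewrite /gdist [q - p]surjective_pairing y0.
exact: enorm_gapp_e1_le_horizontal.
Qed.

(* p is the slit point where the path last entered E': while in E' the path is
   charged from p on, and |g e1| stands for what was paid in E before crossing. *)
Lemma inv_sqrt2_le_chain_to_marksS' Ls L p :
  chain_ok L Ls -> marksS' (lsheet (last L Ls), ldst (last L Ls)) ->
  (lsheet L -> exists m, on_glue_slit true p m) ->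
  (Num.sqrt 2)^-1 <= enorm (gapp g (1, 0)) +
    ((if lsheet L then gdist g p (lsrc L) else 0) + chain_length g L Ls).
Proof.
elim: Ls L p => [|L2 Ls IH] L p /=.
  move=> _ end_S'; have [/= sheet_L _] := end_S'.
  move=> /(_ sheet_L) [m slit_p]; rewrite sheet_L chain_length_nil.
  have := inv_sqrt2_le_slit_to_marksS' slit_p end_S'.
  by have := gdist_triangle g p (lsrc L) (ldst L); lra.
move=> [_ [/junction_ok_cases junction chain]] end_S' entry.
rewrite chain_length_cons.
have [leg_ge0 rest_ge0] := (gdist_ge0 g (lsrc L) (ldst L), chain_length_ge0 L2 Ls).
case: junction => [[same_sheet src_eq] | [other_sheet [n [slit_end src_eq]]]].
- have := IH L2 p chain end_S'; rewrite same_sheet src_eq => /(_ entry).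
  case: (lsheet L); last lra.
  by have := gdist_triangle g p (lsrc L) (ldst L); lra.
- have := IH L2; rewrite other_sheet; move: entry slit_end src_eq.
  case: (lsheet L) => /= entry slit_end src_eq IH2.
  + have vacuous : false -> exists m, on_glue_slit true p m by [].
    have := IH2 p chain end_S' vacuous; have := gdist_ge0 g p (lsrc L); lra.
  + have entry2 : exists m, on_glue_slit true (lsrc L2) m.
      by exists n; rewrite src_eq; exact: on_glue_slit_transfer slit_end.
    by have := IH2 _ chain end_S' (fun=> entry2); rewrite gdistxx; lra.
Qed.

Lemma inv_sqrt2_le_chain_from_marksS Ls L p :
  chain_ok L Ls -> lsheet L = false ->
  marksS' (lsheet (last L Ls), ldst (last L Ls)) -> marksS (false, p) ->
  (Num.sqrt 2)^-1 <= gdist g p (lsrc L) + chain_length g L Ls.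
Proof.
elim: Ls L => [|L2 Ls IH] L /=; first by move=> _ sheet_L [/=]; rewrite sheet_L.
move=> [_ [/junction_ok_cases junction chain]] sheet_L end_S' start_S.
rewrite chain_length_cons.
have [leg_ge0 rest_ge0] := (gdist_ge0 g (lsrc L) (ldst L), chain_length_ge0 L2 Ls).
have triangle := gdist_triangle g p (lsrc L) (ldst L).
case: junction => [[same_sheet src_eq] | [other_sheet [n [slit_end src_eq]]]].
  have := IH L2 chain (etrans same_sheet sheet_L) end_S' start_S.
  by rewrite src_eq; lra.
rewrite sheet_L in other_sheet src_eq slit_end.
have entry : lsheet L2 -> exists m, on_glue_slit true (lsrc L2) m.
  by move=> _; exists n; rewrite src_eq; exact: on_glue_slit_transfer slit_end.
have := inv_sqrt2_le_chain_to_marksS' chain end_S' entry.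
rewrite other_sheet gdistxx /=.
by have := e1_le_marksS_to_slit start_S slit_end; lra.
Qed.

End ChainLength.

Theorem lemma4p5 (R : realType) (g : 'M[R]_2) :
  0 < \det g -> 1 <= opnorm g ->
  (((Num.sqrt (2 : R))^-1)%:E <= hat_dist g (@marksS R) (@marksS' R))%E.
Proof.
move=> _ opnorm_ge1; apply/ereal_infP => _ [[L Ls] /= [chain [start_S end_S']] <-].
have [/= sheet_L _] := start_S; rewrite sheet_L in start_S.
have := inv_sqrt2_le_chain_from_marksS opnorm_ge1 chain sheet_L end_S' start_S.
by rewrite gdistxx add0r lee_fin.
Qed.
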